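(* Let $g(\alpha,\beta,\gamma)=\gamma^{3/2}+\min\big(0.465,\frac{3\alpha\beta}{\alpha+\beta},3\alpha\sqrt\beta\big)$, where $\frac{\alpha\beta}{\alpha+\beta}:=0$ if $(\alpha,\beta)=(0,0)$, and $f(\alpha,\beta,\gamma,\delta)=\min\big(2\delta^{3/2}+g(\alpha,\beta,\gamma),\tfrac14+\tfrac34g(\alpha,\beta,\gamma)\big)$. If $\alpha,\beta,\gamma,\delta$ are nonnegative real numbers with $2\alpha+\beta+\gamma+2\delta=1$ and $\gamma\le\alpha$, then $f(\alpha,\beta,\gamma,\delta)\le\frac12$, with equality if and only if $(\alpha,\beta,\gamma,\delta)=(\frac14,\frac14,\frac14,0)$. *)

From Stdlib Require Import Reals.
Open Scope R_scope.

(* x^{3/2} for x >= 0, written as x * sqrt x (only used at nonnegative x). *)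
Definition pow32 (x : R) : R := x * sqrt x.

Definition hmean (a b : R) : R :=
  if Req_EM_T (a + b) 0 then 0 else a * b / (a + b).

Definition gfun (a b c : R) : R :=
  pow32 c + Rmin 0.465 (Rmin (3 * hmean a b) (3 * a * sqrt b)).

Definition ffun (a b c d : R) : R :=
  Rmin (2 * pow32 d + gfun a b c) (1/4 + 3/4 * gfun a b c).

(* Let g0 be g without the cap 0.465.  Its terms have degree 1 or 3/2 in (a, b, c), so with
   s = 2a + b + c = 1 - 2d <= 1 we get g0 (a, b, c) <= s g0 (a/s, b/s, c/s), and it suffices to
   bound g0 on the normalised triangle 2a + b + c = 1, c <= a.  Writing c = u^2 and b = w^2
   there: for u > 0.43 the term 3a sqrt b (when u >= 1 - w) or 3ab/(a + b) (when u <= 1 - w)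
   shows g0 <= 1/2 minus a polynomial gap in (u, w) vanishing only at u = w = 1/2; for smaller
   u the bound 3ab/(a + b) <= 0.5148 (2a + b) gives g0 <= 0.5148, and even g0 < 1/2 once
   u >= 0.28.  So if sqrt (c/s) >= 0.28 then f <= 2 d^(3/2) + s/2 = 1/2 - d (1 - 2 sqrt d);
   otherwise g <= 0.5148 s, and a case split on d using the cap and the second branch
   1/4 + 3g/4 of f gives f < 1/2. *)

From Stdlib Require Import Reals Lra Psatz.
Open Scope R_scope.

Definition gfun_uncapped (a b c : R) : R :=
  pow32 c + Rmin (3 * hmean a b) (3 * a * sqrt b).

Definition admissible (s a b c : R) : Prop :=
  0 <= a /\ 0 <= b /\ 0 <= c /\ c <= a /\ 2 * a + b + c = s.

Lemma pow32_sqrt (x : R) : 0 <= x -> pow32 x = sqrt x ^ 3.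
Proof. intro Hx. unfold pow32. rewrite <- (pow2_sqrt x) at 1 by exact Hx. ring. Qed.

Lemma Rmin_le_scale (s x y x' y' : R) :
  x' <= s * x -> y' <= s * y -> Rmin x' y' <= s * Rmin x y.
Proof.
  intros Hx Hy. unfold Rmin at 2. destruct (Rle_dec x y).
  - pose proof (Rmin_l x' y'). lra.
  - pose proof (Rmin_r x' y'). lra.
Qed.

Lemma hmean_eq (a b : R) : 0 < a + b -> hmean a b = a * b / (a + b).
Proof. intro H. unfold hmean. destruct (Req_EM_T (a + b) 0); [lra | reflexivity]. Qed.

Lemma hmean_scale (s a b : R) : 0 < s -> hmean (s * a) (s * b) = s * hmean a b.
Proof.
  intro Hs. unfold hmean.
  destruct (Req_EM_T (s * a + s * b) 0) as [E|E];
    destruct (Req_EM_T (a + b) 0) as [E'|E'].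
  - ring.
  - exfalso. apply E'. apply (Rmult_eq_reg_l s); lra.
  - exfalso. apply E. replace (s * a + s * b) with (s * (a + b)) by ring. rewrite E'. ring.
  - field. split; lra.
Qed.

(* 3ab / ((a + b)(2a + b)) is maximal at a = b / sqrt 2, where it equals 9 - 6 sqrt 2 < 0.5148. *)
Lemma hmean_le (a b : R) : 0 <= a -> 0 <= b -> 3 * hmean a b <= 0.5148 * (2 * a + b).
Proof.
  intros Ha Hb. destruct (Req_dec (a + b) 0) as [E|E].
  - unfold hmean. destruct (Req_EM_T (a + b) 0); lra.
  - rewrite hmean_eq by lra.
    assert (Hprod : 3 * a * b <= 0.5148 * (2 * a + b) * (a + b))
      by (pose proof (pow2_ge_0 (a - 0.7069 * b)); nra).
    apply (Rmult_le_reg_r (a + b)); [lra |].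
    replace (3 * (a * b / (a + b)) * (a + b)) with (3 * a * b) by (field; lra).
    lra.
Qed.

Lemma gfun_le_uncapped (a b c : R) : gfun a b c <= gfun_uncapped a b c.
Proof.
  unfold gfun, gfun_uncapped. pose proof (Rmin_r 0.465 (Rmin (3 * hmean a b) (3 * a * sqrt b))).
  lra.
Qed.

Lemma gfun_le_cap (a b c : R) : gfun a b c <= pow32 c + 0.465.
Proof.
  unfold gfun. pose proof (Rmin_l 0.465 (Rmin (3 * hmean a b) (3 * a * sqrt b))). lra.
Qed.

Lemma gfun_uncapped_le_hmean (a b c : R) :
  0 <= a -> 0 <= b -> gfun_uncapped a b c <= pow32 c + 0.5148 * (2 * a + b).
Proof.
  intros Ha Hb. unfold gfun_uncapped.
  pose proof (Rmin_l (3 * hmean a b) (3 * a * sqrt b)). pose proof (hmean_le a b Ha Hb). lra.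
Qed.

Lemma gfun_uncapped_scale (s a b c : R) : 0 < s -> s <= 1 -> 0 <= a -> 0 <= b -> 0 <= c ->
  gfun_uncapped (s * a) (s * b) (s * c) <= s * gfun_uncapped a b c.
Proof.
  intros Hs Hs1 Ha Hb Hc. unfold gfun_uncapped, pow32.
  assert (Hss : sqrt s <= 1) by (rewrite <- sqrt_1; apply sqrt_le_1_alt; lra).
  pose proof (sqrt_pos s). pose proof (sqrt_pos b). pose proof (sqrt_pos c).
  rewrite !sqrt_mult, hmean_scale by lra.
  assert (Hpow : s * c * (sqrt s * sqrt c) <= s * (c * sqrt c))
    by (assert (0 <= s * c * sqrt c) by (apply Rmult_le_pos; [apply Rmult_le_pos|]; lra); nra).
  assert (Hmin : Rmin (3 * (s * hmean a b)) (3 * (s * a) * (sqrt s * sqrt b))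
                 <= s * Rmin (3 * hmean a b) (3 * a * sqrt b)).
  { apply Rmin_le_scale; [lra |].
    assert (0 <= s * a * sqrt b) by (apply Rmult_le_pos; [apply Rmult_le_pos|]; lra). nra. }
  lra.
Qed.

Lemma gfun_uncapped_le_scaled (s a b c : R) : 0 < s -> s <= 1 -> 0 <= a -> 0 <= b -> 0 <= c ->
  gfun_uncapped a b c <= s * gfun_uncapped (a / s) (b / s) (c / s).
Proof.
  intros Hs Hs1 Ha Hb Hc.
  assert (Hdiv : forall x, 0 <= x -> 0 <= x / s) by (intros; apply Rle_mult_inv_pos; lra).
  replace (gfun_uncapped a b c) with (gfun_uncapped (s * (a / s)) (s * (b / s)) (s * (c / s)))
    by (f_equal; field; lra).
  apply gfun_uncapped_scale; auto.
Qed.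

Lemma admissible_div (s a b c : R) : admissible s a b c -> 0 < s ->
  admissible 1 (a / s) (b / s) (c / s).
Proof.
  intros (Ha & Hb & Hc & Hca & Hsum) Hs.
  repeat split; try (apply Rle_mult_inv_pos; lra).
  - apply Rmult_le_compat_r; [left; apply Rinv_0_lt_compat |]; lra.
  - rewrite <- Hsum. field. lra.
Qed.

Lemma pow_eq_0 (x : R) (n : nat) : x ^ n = 0 -> x = 0.
Proof.
  intro H. destruct (Req_dec x 0) as [E|E]; [exact E |]. exfalso. exact (pow_nonzero x n E H).
Qed.

Lemma ellipse_abscissa (w : R) : 0 <= w -> w <= 1 -> exists t, 0 <= t /\ 3 * t^2 + w^2 = 1.
Proof.
  intros Hw Hw1. exists (sqrt ((1 - w^2) / 3)). split; [apply sqrt_pos |].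
  rewrite pow2_sqrt by nra. field.
Qed.

(* With c = u^2, b = w^2 and a = (1 - w^2 - u^2)/2, so that 2a + b + c = 1, we have
   1/2 - (c^(3/2) + 3 a sqrt b) = sqrt_gap u w / 2 and
   1/2 - (c^(3/2) + 3 ab/(a + b)) = hmean_gap u w / (a + b). *)
Definition sqrt_gap (u w : R) : R := 1 - 2 * u^3 - 3 * w * (1 - w^2 - u^2).

Definition hmean_gap (u w : R) : R :=
  (1/2 - u^3) * (1 + w^2 - u^2) / 2 - 3 * w^2 * (1 - w^2 - u^2) / 2.

Lemma sqrt_gap_nonneg_on_ellipse (t w : R) : 0 <= t -> 0 <= w -> 3 * t^2 + w^2 = 1 ->
  0 <= sqrt_gap t w /\ (sqrt_gap t w = 0 -> t = 1/2).
Proof.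
  intros Ht Hw Hell. unfold sqrt_gap.
  assert (Hpos : 0 < 1 - 2 * t^3) by nra.
  assert (Hright : 0 <= 6 * w * t^2) by nra.
  assert (Hsq : (1 - 2 * t^3)^2 - (6 * w * t^2)^2
                = (2 * t - 1)^2 * (1 + 4 * t + 12 * t^2 + 28 * t^3 + 28 * t^4)).
  { replace ((6 * w * t^2)^2) with (36 * t^4 * w^2) by ring.
    replace (w^2) with (1 - 3 * t^2) by lra. ring. }
  assert (Hq : 0 < 1 + 4 * t + 12 * t^2 + 28 * t^3 + 28 * t^4) by nra.
  replace (1 - 2 * t^3 - 3 * w * (1 - w^2 - t^2)) with (1 - 2 * t^3 - 6 * w * t^2)
    by (replace (w^2) with (1 - 3 * t^2) by lra; ring).
  split.
  - pose proof (pow2_ge_0 (2 * t - 1)). nra.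
  - intro E.
    assert (E2 : (2 * t - 1)^2 * (1 + 4 * t + 12 * t^2 + 28 * t^3 + 28 * t^4) = 0)
      by (rewrite <- Hsq; replace (6 * w * t^2) with (1 - 2 * t^3) by lra; ring).
    apply Rmult_integral in E2. destruct E2 as [E2|E2]; [apply pow_eq_0 in E2 |]; lra.
Qed.

(* Here and in the hmean_gap lemmas, the gap is its value at an endpoint u0 of the range of u
   (u0 = 1 - w, or u0 = t on the ellipse 3t^2 + w^2 = 1) plus (u - u0) times a factor of
   constant sign. *)
Lemma sqrt_gap_nonneg_of_le_w (u w : R) :
  0 <= u -> 1 - w <= u -> u <= w -> 3 * u^2 + w^2 <= 1 ->
  0 <= sqrt_gap u w /\ (sqrt_gap u w = 0 -> u = 1/2 /\ w = 1/2).
Proof.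
  intros Hu Hlo Hhi Hell. unfold sqrt_gap.
  set (phi := 3 * w * (u + (1 - w)) - 2 * (u^2 + u * (1 - w) + (1 - w)^2)).
  assert (Hphi : 0 <= phi) by (unfold phi; nra).
  assert (Hid : 1 - 2 * u^3 - 3 * w * (1 - w^2 - u^2) = (u - (1 - w)) * phi + (2 * w - 1)^3)
    by (unfold phi; ring).
  assert (H1 : 0 <= (u - (1 - w)) * phi) by (apply Rmult_le_pos; lra).
  assert (H2 : 0 <= (2 * w - 1)^3) by (apply pow_le; lra).
  rewrite Hid. split; [lra |].
  intro E. assert (Ew : (2 * w - 1)^3 = 0) by lra. apply pow_eq_0 in Ew. nra.
Qed.

Lemma sqrt_gap_nonneg_of_ge_w (u w t : R) :
  0 <= w -> 0 <= t -> w <= u -> u <= t -> 3 * t^2 + w^2 = 1 ->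
  0 <= sqrt_gap u w /\ (sqrt_gap u w = 0 -> u = 1/2 /\ w = 1/2).
Proof.
  intros Hw Ht Hlo Hhi Hell.
  destruct (sqrt_gap_nonneg_on_ellipse t w Ht Hw Hell) as [Gt Gt_eq].
  set (phi := 2 * (u^2 + u * t + t^2) - 3 * w * (u + t)).
  assert (Hphi : 0 <= phi) by (unfold phi; nra).
  assert (Hid : sqrt_gap u w = (t - u) * phi + sqrt_gap t w)
    by (unfold sqrt_gap, phi; replace (w^2) with (1 - 3 * t^2) by lra; ring).
  assert (H1 : 0 <= (t - u) * phi) by (apply Rmult_le_pos; lra).
  rewrite Hid. split; [lra |].
  intro E. assert (Et : t = 1/2) by (apply Gt_eq; lra). subst t. nra.
Qed.

Lemma sqrt_gap_nonneg (u w : R) : 0 <= u -> 0 <= w -> 1 - w <= u -> 3 * u^2 + w^2 <= 1 ->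
  0 <= sqrt_gap u w /\ (sqrt_gap u w = 0 -> u = 1/2 /\ w = 1/2).
Proof.
  intros Hu Hw Hlo Hell. destruct (Rle_lt_dec u w) as [Huw | Hwu].
  - apply sqrt_gap_nonneg_of_le_w; lra.
  - destruct (ellipse_abscissa w Hw) as (t & Ht & Hell_t); [nra |].
    apply (sqrt_gap_nonneg_of_ge_w u w t); nra.
Qed.

Lemma hmean_gap_nonneg_of_half_le_w (u w : R) : 0.43 <= u -> 1/2 <= w -> u <= 1 - w ->
  0 <= hmean_gap u w /\ (hmean_gap u w = 0 -> u = 1/2 /\ w = 1/2).
Proof.
  intros Hu Hw Hhi.
  set (q := 1/2 * u^4 - 1/2 * u^3 * w + 1/2 * u^3 - u^2 * w + 5/2 * u * w^2 - u * w - 1/4 * u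
            - 5/2 * w^3 + 7/2 * w^2 - 3/4 * w - 1/4).
  assert (Hq : q <= -1/1000).
  { unfold q. assert (0 <= (u - 0.43) * (w - 1/2)) by nra.
    assert (0 <= (1/2 - u) * (0.57 - w)) by nra.
    assert (0 <= (u - 0.43) * (0.57 - w)) by nra.
    assert (0 <= (1/2 - u) * (w - 1/2)) by nra.
    nra. }
  assert (Hid : hmean_gap u w = (u - (1 - w)) * q + w * (2 * w - 1)^3 / 2)
    by (unfold hmean_gap, q; field).
  assert (H1 : 0 <= (u - (1 - w)) * q) by nra.
  assert (H2 : 0 <= w * (2 * w - 1)^3) by (apply Rmult_le_pos; [lra | apply pow_le; lra]).
  rewrite Hid. split; [lra |]. intro E.
  assert (E1 : w * (2 * w - 1)^3 = 0) by nra.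
  apply Rmult_integral in E1. destruct E1 as [E1|E1]; [lra |]. apply pow_eq_0 in E1.
  assert (E2 : (u - (1 - w)) * q = 0) by lra.
  apply Rmult_integral in E2. lra.
Qed.

Lemma hmean_gap_nonneg_on_ellipse (u w t : R) :
  1/2 <= t -> 0 <= w -> 3 * t^2 + w^2 = 1 -> 0.43 <= u -> u <= t ->
  0 <= hmean_gap u w /\ (hmean_gap u w = 0 -> u = 1/2 /\ w = 1/2).
Proof.
  intros Ht Hw Hell Hlo Hhi.
  assert (Ht2 : t <= 0.58) by nra.
  set (r := 1/2 * u^4 + 1/2 * u^3 * t + 2 * u^2 * t^2 - u^2 + 2 * u * t^3 - 9/2 * u * t^2
            - u * t + 5/4 * u + 2 * t^4 - 9/2 * t^3 - t^2 + 5/4 * t).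
  assert (Hr : r <= -1/20).
  { unfold r. assert (0 <= (u - 0.43) * (t - 1/2)) by nra.
    assert (0 <= (0.58 - u) * (0.58 - t)) by nra.
    assert (0 <= (u - 0.43) * (0.58 - t)) by nra.
    assert (0 <= (0.58 - u) * (t - 1/2)) by nra.
    nra. }
  set (q := 2 * t^4 + 10 * t^3 + 4 * t^2 - 2 * t - 1).
  assert (Hq : 0 < q) by (unfold q; nra).
  assert (Hid : hmean_gap u w = (u - t) * r + (t - 1/2) * q).
  { unfold hmean_gap, r, q. replace (w^2) with (1 - 3 * t^2) by lra. field. }
  assert (H1 : 0 <= (u - t) * r) by nra.
  assert (H2 : 0 <= (t - 1/2) * q) by nra.
  rewrite Hid. split; [lra |]. intro E.
  assert (Et : t = 1/2) by nra.
  assert (Eu : u = t) by nra.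
  split; nra.
Qed.

Lemma hmean_gap_nonneg (u w : R) : 0.43 <= u -> 0 <= w -> u <= 1 - w -> 3 * u^2 + w^2 <= 1 ->
  0 <= hmean_gap u w /\ (hmean_gap u w = 0 -> u = 1/2 /\ w = 1/2).
Proof.
  intros Hu Hw Hhi Hell. destruct (Rle_lt_dec (1/2) w) as [Hw_large | Hw_small].
  - apply hmean_gap_nonneg_of_half_le_w; lra.
  - destruct (ellipse_abscissa w Hw) as (t & Ht & Hell_t); [lra |].
    apply (hmean_gap_nonneg_on_ellipse u w t); nra.
Qed.

Lemma gfun_uncapped_le_half (a b c : R) : admissible 1 a b c -> 0.28 <= sqrt c ->
  gfun_uncapped a b c <= 1/2 /\
  (gfun_uncapped a b c = 1/2 -> a = 1/4 /\ b = 1/4 /\ c = 1/4).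
Proof.
  intros (Ha & Hb & Hc & Hca & Hsum) Hu.
  pose proof (gfun_uncapped_le_hmean a b c Ha Hb) as Hhm.
  unfold gfun_uncapped in *. rewrite pow32_sqrt in * by exact Hc.
  set (u := sqrt c) in *. set (w := sqrt b) in *.
  assert (Hw : 0 <= w) by apply sqrt_pos.
  assert (Ec : c = u^2) by (symmetry; apply pow2_sqrt; exact Hc).
  assert (Eb : b = w^2) by (symmetry; apply pow2_sqrt; exact Hb).
  assert (Ea : a = (1 - w^2 - u^2) / 2) by lra.
  assert (Hell : 3 * u^2 + w^2 <= 1) by lra.
  assert (Hext : u = 1/2 -> w = 1/2 -> a = 1/4 /\ b = 1/4 /\ c = 1/4)
    by (intros Eu Ew; rewrite Ea, Eb, Ec, Eu, Ew; repeat split; field).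
  destruct (Rle_lt_dec u 0.43) as [Hu_small | Hu_large].
  { assert (0 <= (u - 0.28) * (0.43 - u)) by nra. split; intros; nra. }
  destruct (Rle_lt_dec (1 - w) u) as [Hsq | Hhmean].
  - destruct (sqrt_gap_nonneg u w) as [G0 Geq]; try lra.
    assert (HX : u^3 + Rmin (3 * hmean a b) (3 * a * w) <= 1/2 - sqrt_gap u w / 2).
    { pose proof (Rmin_r (3 * hmean a b) (3 * a * w)).
      replace (3 * a * w) with (3 * w * (1 - w^2 - u^2) / 2) in * by (rewrite Ea; field).
      unfold sqrt_gap. lra. }
    split; [lra |]. intro E. destruct Geq as [Eu Ew]; [lra |]. exact (Hext Eu Ew).
  - destruct (hmean_gap_nonneg u w) as [G0 Geq]; try lra.
    assert (Hab : 0 < a + b) by nra.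
    assert (HX : u^3 + Rmin (3 * hmean a b) (3 * a * w) <= 1/2 - hmean_gap u w / (a + b)).
    { pose proof (Rmin_l (3 * hmean a b) (3 * a * w)).
      replace (1/2 - hmean_gap u w / (a + b)) with (u^3 + 3 * hmean a b); [lra |].
      rewrite hmean_eq by exact Hab. unfold hmean_gap. rewrite Ea, Eb in *. field. lra. }
    assert (Hfrac : 0 <= hmean_gap u w / (a + b)) by (apply Rle_mult_inv_pos; lra).
    split; [lra |]. intro E. destruct Geq as [Eu Ew]; [| exact (Hext Eu Ew)].
    assert (E0 : hmean_gap u w / (a + b) = 0) by lra.
    replace (hmean_gap u w) with (hmean_gap u w / (a + b) * (a + b)) by (field; lra).
    rewrite E0. ring.
Qed.

Lemma admissible_gfun_uncapped_le (a b c : R) :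
  admissible 1 a b c -> gfun_uncapped a b c <= 0.5148.
Proof.
  intros Hadm. destruct (Rle_lt_dec 0.28 (sqrt c)) as [Hu | Hu].
  - destruct (gfun_uncapped_le_half a b c Hadm Hu). lra.
  - destruct Hadm as (Ha & Hb & Hc & Hca & Hsum).
    pose proof (gfun_uncapped_le_hmean a b c Ha Hb). rewrite pow32_sqrt in * by exact Hc.
    pose proof (sqrt_pos c). rewrite <- (pow2_sqrt c) in Hsum by exact Hc. nra.
Qed.

Lemma gfun_uncapped_le_weighted (s a b c : R) : admissible s a b c -> s <= 1 ->
  gfun_uncapped a b c <= 0.5148 * s.
Proof.
  intros Hadm Hs1. pose proof Hadm as (Ha & Hb & Hc & Hca & Hsum).
  destruct (Rle_lt_or_eq_dec 0 s) as [Hs | Hs0]; [lra | |].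
  - pose proof (gfun_uncapped_le_scaled s a b c Hs Hs1 Ha Hb Hc).
    pose proof (admissible_gfun_uncapped_le _ _ _ (admissible_div s a b c Hadm Hs)).
    nra.
  - assert (a = 0 /\ c = 0) as [-> ->] by lra. unfold gfun_uncapped, pow32.
    pose proof (Rmin_r (3 * hmean 0 b) (3 * 0 * sqrt b)). lra.
Qed.

Lemma Rmin_lt_half_or_v_eq0 (v g : R) : 0 <= v -> g <= 1/2 - v^2 ->
  Rmin (2 * v^3 + g) (1/4 + 3/4 * g) < 1/2 \/ v = 0.
Proof.
  intros Hv Hg. destruct (Req_dec v 0) as [Hv0 | Hv0]; [right; exact Hv0 | left].
  destruct (Rlt_le_dec v (1/2)) as [Hv_small | Hv_large].
  - pose proof (Rmin_l (2 * v^3 + g) (1/4 + 3/4 * g)).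
    assert (0 < v^2 * (1 - 2 * v)) by (apply Rmult_lt_0_compat; nra). nra.
  - pose proof (Rmin_r (2 * v^3 + g) (1/4 + 3/4 * g)). nra.
Qed.

Lemma Rmin_lt_half_of_large_v (v g : R) : 0.18 <= v -> 2 * v^2 <= 1 ->
  g <= 0.5148 * (1 - 2 * v^2) -> Rmin (2 * v^3 + g) (1/4 + 3/4 * g) < 1/2.
Proof.
  intros Hv Hv1 Hg. destruct (Rle_lt_dec 0.45 v) as [Hv_large | Hv_small].
  - pose proof (Rmin_r (2 * v^3 + g) (1/4 + 3/4 * g)). nra.
  - pose proof (Rmin_l (2 * v^3 + g) (1/4 + 3/4 * g)).
    assert (0 <= (v - 0.18) * (0.45 - v)) by nra. nra.
Qed.

Lemma ffun_sqrt (a b c d : R) : 0 <= d ->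
  ffun a b c d = Rmin (2 * sqrt d ^ 3 + gfun a b c) (1/4 + 3/4 * gfun a b c).
Proof. intro Hd. unfold ffun. rewrite pow32_sqrt by exact Hd. reflexivity. Qed.

Lemma ffun_lt_half_or_extremal (a b c d : R) :
  0 <= a -> 0 <= b -> 0 <= c -> 0 <= d -> 2 * a + b + c + 2 * d = 1 -> c <= a ->
  ffun a b c d < 1/2 \/ (a = 1/4 /\ b = 1/4 /\ c = 1/4 /\ d = 0).
Proof.
  intros Ha Hb Hc Hd Hsum Hca. rewrite ffun_sqrt by exact Hd.
  pose proof (pow2_sqrt d Hd) as Ed.
  pose proof (gfun_le_uncapped a b c) as Hg. pose proof (gfun_le_cap a b c) as Hg_cap.
  set (v := sqrt d) in *. set (g := gfun a b c) in *. set (s := 1 - 2 * v^2).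
  assert (Hv : 0 <= v) by apply sqrt_pos.
  assert (Hadm : admissible s a b c) by (unfold admissible, s; repeat split; lra).
  assert (Hs1 : s <= 1) by (unfold s; nra).
  destruct (Rle_lt_dec 0.18 v) as [Hv_large | Hv_small].
  { left. apply Rmin_lt_half_of_large_v; [lra | nra |].
    pose proof (gfun_uncapped_le_weighted s a b c Hadm Hs1). unfold s in *. lra. }
  assert (Hs : 0 < s) by (unfold s; nra).
  pose proof (admissible_div s a b c Hadm Hs) as Hadm'.
  pose proof (gfun_uncapped_le_scaled s a b c Hs Hs1 Ha Hb Hc) as Hscale.
  destruct (Rle_lt_dec 0.28 (sqrt (c / s))) as [Hc_large | Hc_small].
  - destruct (gfun_uncapped_le_half _ _ _ Hadm' Hc_large) as [Hle Heq].
    assert (Hg_half : g <= 1/2 - v^2) by (unfold s in *; nra).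
    destruct (Rmin_lt_half_or_v_eq0 v g Hv Hg_half) as [Hlt | Hv0]; [left; exact Hlt |].
    assert (Es : s = 1) by (unfold s; rewrite Hv0; ring).
    rewrite Es, !Rdiv_1_r in *.
    pose proof (Rmin_l (2 * v^3 + g) (1/4 + 3/4 * g)).
    assert (v^3 = 0) by (rewrite Hv0; ring).
    destruct (Rle_lt_or_eq_dec _ _ Hle) as [Hlt | Heq_half]; [left; lra | right].
    destruct (Heq Heq_half) as (-> & -> & ->). repeat split; nra.
  - left.
    pose proof (Rmin_l (2 * v^3 + g) (1/4 + 3/4 * g)).
    assert (Hcs : c <= c / s).
    { assert (0 <= c / s) by (apply Rle_mult_inv_pos; lra).
      replace c with (s * (c / s)) at 1 by (field; lra). nra. }
    assert (Hsqrt : sqrt c < 0.28) by (pose proof (sqrt_le_1_alt _ _ Hcs); lra).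
    rewrite pow32_sqrt in * by exact Hc. pose proof (sqrt_pos c).
    assert (sqrt c ^ 3 <= 0.28 ^ 3) by (apply pow_incr; lra). nra.
Qed.

Lemma ffun_extremal : ffun (1/4) (1/4) (1/4) 0 = 1/2.
Proof.
  unfold ffun, gfun, pow32, hmean. rewrite sqrt_0.
  replace (sqrt (1/4)) with (1/2) by (symmetry; apply sqrt_lem_1; lra).
  destruct (Req_EM_T (1/4 + 1/4) 0) as [E|E]; [lra |].
  replace (1/4 * (1/4) / (1/4 + 1/4)) with (1/8) by field.
  unfold Rmin. repeat destruct Rle_dec; lra.
Qed.

Theorem lemma5p6 (a b c d : R) :
  0 <= a -> 0 <= b -> 0 <= c -> 0 <= d ->
  2 * a + b + c + 2 * d = 1 -> c <= a ->
  ffun a b c d <= 1/2 /\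
  (ffun a b c d = 1/2 <-> (a = 1/4 /\ b = 1/4 /\ c = 1/4 /\ d = 0)).
Proof.
  intros Ha Hb Hc Hd Hsum Hca.
  destruct (ffun_lt_half_or_extremal a b c d Ha Hb Hc Hd Hsum Hca) as [Hlt | Hext].
  - split; [lra |]. split; [lra |].
    intros (-> & -> & -> & ->). rewrite ffun_extremal in Hlt. lra.
  - destruct Hext as (-> & -> & -> & ->). rewrite ffun_extremal. split; [lra | tauto].
Qed.
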